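(* Let $T$ be an infinite periodic tree. Then either $\mathrm{br}(T)>1$, or there exists an integer $d\ge1$ such that $|B(n)|/n^d$ is bounded away from $0$ and $\infty$ (for $n\ge1$).
   Context: $T$ is an infinite locally finite tree rooted at $o$; $|x|$ is the distance from $o$ to $x$, $T^x$ the subtree of descendants of $x$ rooted at $x$, $B(n)=\{x:|x|\le n\}$. For an edge $e=(e^-,e^+)$ with $|e^+|=|e^-|+1$ set $|e|=|e^+|$. A cutset is a set of edges meeting every infinite path from $o$; $\Pi(T)$ is the set of cutsets. The branching number is $\mathrm{br}(T)=\sup\{\lambda>0:\inf_{\pi\in\Pi(T)}\sum_{e\in\pi}\lambda^{-|e|}>0\}$. For an integer $N\ge0$, $T$ is $N$-periodic if for every vertex $x$ there is an adjacency-preserving bijection $f:T^x\to T^{f(x)}$ with $|f(x)|\le N$; $T$ is periodic if it is $N$-periodic for some $N$. *)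

From HB Require Import structures.
From mathcomp Require Import all_boot all_order all_algebra.
From mathcomp Require Import all_classical all_reals all_analysis.
Set Implicit Arguments. Unset Strict Implicit. Unset Printing Implicit Defensive.
Import Order.TTheory GRing.Theory Num.Theory.
Local Open Scope classical_set_scope.
Local Open Scope ring_scope.

(* A locally finite rooted tree is encoded (Ulam--Harris style) by a
   child-count function  c : seq nat -> nat .  Vertices are the words
   [:: i1; ...; ik] such that each letter is a valid child index of the
   vertex given by the preceding prefix; the root o is [::], the children
   of a vertex s are the words rcons s i with i < c s, and |s| = size s.
   Every locally finite rooted tree is isomorphic to exactly such a tree. *)
Notation tree := (seq nat -> nat).

Fixpoint vert (c : tree) (s : seq nat) : bool :=
  match s with
  | [::] => true
  | i :: t => (i < c [::])%N && vert (fun u => c (i :: u)) t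
  end.

Definition verts (c : tree) : set (seq nat) := [set s | vert c s].

Definition subtree (c : tree) (x : seq nat) : tree := fun u => c (x ++ u).

Definition adj (c : tree) (u v : seq nat) : Prop :=
  [/\ vert c u, vert c v &
      (exists i, v = rcons u i) \/ (exists i, u = rcons v i)].

Definition tree_iso (c1 c2 : tree) : Prop :=
  exists f : seq nat -> seq nat,
    [/\ set_bij (verts c1) (verts c2) f,
        f [::] = [::] &
        forall u v, vert c1 u -> vert c1 v -> (adj c1 u v <-> adj c2 (f u) (f v))].

Definition periodic_N (c : tree) (N : nat) : Prop :=
  forall x, vert c x ->
    exists y, [/\ vert c y, (size y <= N)%N & tree_iso (subtree c x) (subtree c y)].

Definition periodic_tree (c : tree) : Prop := exists N : nat, periodic_N c N.

Definition infinite_tree (c : tree) : Prop := ~ finite_set (verts c).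

Definition ray (c : tree) (p : nat -> seq nat) : Prop :=
  p 0%N = [::] /\ forall n, vert c (p n.+1) /\ exists i, p n.+1 = rcons (p n) i.

(* An edge e = (e^-, e^+) is identified with its endpoint e^+ (a non-root
   vertex); then |e| = size e^+. *)
Definition edge (c : tree) (e : seq nat) : Prop := vert c e /\ e <> [::].

Definition cutset (c : tree) (pi : set (seq nat)) : Prop :=
  pi `<=` edge c /\ forall p, ray c p -> exists n, pi (p n.+1).

Definition cut_inf {R : realType} (c : tree) (lam : R) : \bar R :=
  ereal_inf [set \esum_(e in pi) ((lam ^- size e)%:E) | pi in cutset c].

Definition br {R : realType} (c : tree) : \bar R :=
  ereal_sup [set lam%:E | lam in [set lam : R | 0 < lam /\ (0 < cut_inf c lam)%E]].

(* enumeration of the ball B(n) = {x : |x| <= n} *)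
Fixpoint ball (c : tree) (n : nat) : seq (seq nat) :=
  match n with
  | 0%N => [:: [::]]
  | n'.+1 => [::] :: flatten [seq [seq i :: u | u <- ball (fun u => c (i :: u)) n']
                              | i <- iota 0 (c [::])]
  end.

Definition ball_card (c : tree) (n : nat) : nat := size (ball c n).

(* If some subtree T^x contains two copies of itself rooted at incomparable
   descendants x ++ a and x ++ b, then so does every subtree isomorphic to T^x,
   with |a|, |b| <= L.  For lam = 2 ^ (1/L) > 1, a cutset of total weight
   sum_e lam^-|e| below lam^-|x| / 2 leaves x "light" (little weight strictly
   below, relative to its own), and one of the two copies below a light copy is
   again light; the ray through light copies meets the cutset at an edge whose
   weight alone is too large.  Hence br T >= lam > 1.

   Otherwise, periodicity leaves finitely many isomorphism types of subtrees
   and we induct on the number of types occurring below x.  If T^x has a proper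
   copy at x ++ s, then |B_x(n + |s|)| - |B_x(n)| is a sum of balls around
   vertices just off the path x ++ s, which see fewer types, so |B_x(n)| grows
   like n^(d+1) when those grow like n^d; if not, every child sees fewer types.
   An infinite tree cannot have bounded balls, so the exponent is positive. *)

From Pilot Require Import Defs.
From HB Require Import structures.
From mathcomp Require Import all_boot all_order all_algebra.
From mathcomp Require Import all_classical all_reals all_analysis.
From mathcomp Require Import zify lra.
Import Order.TTheory GRing.Theory Num.Theory.

Set Implicit Arguments.
Unset Strict Implicit.
Unset Printing Implicit Defensive.

Local Open Scope classical_set_scope.

Section Words.
Implicit Types (c : tree) (x w : seq nat).

Lemma vert_cat c x w : vert c (x ++ w) = vert c x && vert (subtree c x) w.
Proof. by elim: x c => [|i x IH] c //=; rewrite IH andbA. Qed.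

Lemma vert_catl c x w : vert c (x ++ w) -> vert c x.
Proof. by rewrite vert_cat => /andP[]. Qed.

Lemma vert_rcons c x i : vert c (rcons x i) = vert c x && (i < c x)%N.
Proof. by rewrite -cats1 vert_cat /= /subtree cats0 andbT. Qed.

Lemma vert_rconsl c x i : vert c (rcons x i) -> vert c x.
Proof. by rewrite vert_rcons => /andP[]. Qed.

Lemma vert_take c x k : vert c x -> vert c (take k x).
Proof. by rewrite -{1}(cat_take_drop k x); apply: vert_catl. Qed.

Lemma subtree_cat c x w : subtree (subtree c x) w = subtree c (x ++ w).
Proof. by apply: boolp.funext => u; rewrite /subtree catA. Qed.

Lemma catsI x w1 w2 : x ++ w1 = x ++ w2 -> w1 = w2.
Proof. by move=> /(congr1 (drop (size x))); rewrite !drop_size_cat. Qed.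

Lemma ball_cardS c n : ball_card c n.+1 =
  (\sum_(i <- iota 0 (c [::])) ball_card (fun u => c (i :: u)) n).+1.
Proof.
rewrite /ball_card /= size_flatten /shape -map_comp sumnE big_map.
by congr _.+1; apply: eq_bigr => i _ /=; rewrite size_map.
Qed.

Lemma ball_card_subtreeS c x n : ball_card (subtree c x) n.+1 =
  (\sum_(j <- iota 0 (c x)) ball_card (subtree c (rcons x j)) n).+1.
Proof.
rewrite ball_cardS /subtree cats0; congr _.+1; apply: eq_bigr => j _.
by congr ball_card; apply: boolp.funext => u; rewrite cat_rcons.
Qed.

Lemma ball_card_gt0 c n : (0 < ball_card c n)%N.
Proof. by case: n => [|n]; rewrite ?ball_cardS. Qed.

Lemma mem_ball c n x : (x \in Defs.ball c n) = vert c x && (size x <= n)%N.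
Proof.
elim: n c x => [|n IH] c [|i x] //=; rewrite ?andbF // inE /=.
apply/flatten_mapP/idP => [[j]|/andP[/andP[ic vx] sx]].
  rewrite mem_iota => /andP[_ jc] /mapP[u]; rewrite IH => /andP[vu su] [-> ->].
  by rewrite jc vu.
by exists i; rewrite ?mem_iota //; apply/mapP; exists x; rewrite // IH vx.
Qed.

Lemma ball_card_size c x : vert c x -> ((size x).+1 <= ball_card c (size x))%N.
Proof.
move=> vx; rewrite -[X in (X <= _)%N](size_iota 0) -(size_map (take^~ x)).
apply: uniq_leq_size.
  rewrite map_inj_in_uniq ?iota_uniq // => k1 k2.
  rewrite !mem_iota !add0n !ltnS => /andP[_ h1] /andP[_ h2] /(congr1 size).
  by rewrite !size_takel.
move=> y /mapP[k]; rewrite mem_iota add0n ltnS => /andP[_ hk] ->.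
by rewrite mem_ball size_takel // hk vert_take.
Qed.

End Words.

Lemma adj_rcons c x i : vert c (rcons x i) -> adj c x (rcons x i).
Proof.
by move=> vxi; split=> //; [apply: vert_rconsl vxi | left; exists i].
Qed.

Lemma adj_subtree c x w1 w2 : vert c x ->
  adj (subtree c x) w1 w2 <-> adj c (x ++ w1) (x ++ w2).
Proof.
move=> vx; rewrite /adj !vert_cat vx /=.
split=> -[v1 v2 [[i e]|[i e]]]; split=> //.
- by left; exists i; rewrite e rcons_cat.
- by right; exists i; rewrite e rcons_cat.
- by left; exists i; apply: (@catsI x); rewrite -rcons_cat.
- by right; exists i; apply: (@catsI x); rewrite -rcons_cat.
Qed.

Section RootedIsomorphism.
Variables (c1 c2 : tree) (f : seq nat -> seq nat).
Hypothesis f_bij : set_bij (verts c1) (verts c2) f.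
Hypothesis f_root : f [::] = [::].
Hypothesis f_adj : forall u v, vert c1 u -> vert c1 v ->
  (adj c1 u v <-> adj c2 (f u) (f v)).

Lemma iso_vert u : vert c1 u -> vert c2 (f u).
Proof. by case: f_bij => + _ _; apply. Qed.

Lemma iso_inj u v : vert c1 u -> vert c1 v -> f u = f v -> u = v.
Proof. by move=> vu vv; case: f_bij => _ inj _; apply: inj; apply/mem_set. Qed.

Lemma iso_surj v : vert c2 v -> exists2 u, vert c1 u & f u = v.
Proof. by case: f_bij => _ _ /[apply] -[u]; exists u. Qed.

(* An edge maps to an edge, so [f (rcons x i)] is a child or the parent of
   [f x]; the root being fixed rules out the second option by induction. *)
Lemma iso_size u : vert c1 u -> size (f u) = size u.
Proof.
have [n] := ubnP (size u); elim: n u => // n IH u.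
case/lastP: u => [|x i] su vxi; first by rewrite f_root.
rewrite size_rcons ltnS in su.
have vx := vert_rconsl vxi.
have [_ _ [[j ->]|[j e]]] := (f_adj vx vxi).1 (adj_rcons vxi).
  by rewrite !size_rcons IH.
case/lastP: x su vx vxi e => [|y k] su vx vxi e.
  by move: e; rewrite f_root; case: (f _).
have vy := vert_rconsl vx.
have [_ _ [[j' e']|[j' e']]] := (f_adj vy vx).1 (adj_rcons vx).
  move: e'; rewrite e => /rcons_inj[/(iso_inj vxi vy) exy _].
  by move: (congr1 size exy); rewrite !size_rcons; lia.
have IHy : size (f y) = size y by apply: IH; rewrite // size_rcons in su; lia.
move: (congr1 size e'); rewrite size_rcons IHy IH //; rewrite size_rcons; lia.
Qed.

Lemma iso_rcons x i : vert c1 (rcons x i) -> exists j, f (rcons x i) = rcons (f x) j.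
Proof.
move=> vxi; have vx := vert_rconsl vxi.
have [_ _ [[j e]|[j e]]] := (f_adj vx vxi).1 (adj_rcons vxi); first by exists j.
by move: (congr1 size e); rewrite size_rcons !iso_size // size_rcons; lia.
Qed.

Lemma iso_take u k : vert c1 u -> take k (f u) = f (take k u).
Proof.
elim/last_ind: u => [|x i IH] vxi; first by rewrite f_root.
have vx := vert_rconsl vxi.
have [j e] := iso_rcons vxi; have sx := iso_size vx; rewrite e.
case: (leqP k (size x)) => hk; first by rewrite -!cats1 !takel_cat ?sx // IH.
by rewrite !take_oversize ?size_rcons ?sx // e.
Qed.

Lemma iso_cat x w : vert c1 (x ++ w) -> f (x ++ w) = f x ++ drop (size x) (f (x ++ w)).
Proof.
move=> vxw; rewrite -[in LHS](cat_take_drop (size x) (f (x ++ w))).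
by rewrite iso_take // take_size_cat.
Qed.

Lemma iso_subtree x : vert c1 x -> tree_iso (subtree c1 x) (subtree c2 (f x)).
Proof.
move=> vx; have sx := iso_size vx.
have vxw w : vert (subtree c1 x) w -> vert c1 (x ++ w) by rewrite vert_cat vx.
exists (fun w => drop (size x) (f (x ++ w))); split.
- split.
  + move=> w /vxw vw; have := iso_vert vw.
    by rewrite {1}(iso_cat vw) vert_cat => /andP[].
  + move=> w1 w2 /set_mem/vxw v1 /set_mem/vxw v2 e; apply: (@catsI x).
    by apply: iso_inj => //; rewrite (iso_cat v1) (iso_cat v2) e.
  + move=> w' vw'.
    have [v vv fv] : exists2 v, vert c1 v & f v = f x ++ w'.
      by apply: iso_surj; rewrite vert_cat iso_vert.
    have vxv : take (size x) v = x.
      apply: iso_inj; rewrite ?vert_take // -iso_take // fv.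
      by rewrite -sx take_size_cat.
    exists (drop (size x) v).
      by move: vv; rewrite -{1}(cat_take_drop (size x) v) vxv vert_cat => /andP[].
    have -> : x ++ drop (size x) v = v by rewrite -{1}vxv cat_take_drop.
    by rewrite fv -sx drop_size_cat.
- by rewrite cats0 drop_oversize // sx.
- move=> u v /vxw vu /vxw vv.
  by rewrite adj_subtree // f_adj // adj_subtree ?iso_vert // -!iso_cat.
Qed.

End RootedIsomorphism.

Lemma tree_iso_refl c : tree_iso c c.
Proof. by exists id; split=> //; split=> // u vu; exists u. Qed.

Lemma tree_iso_sym c1 c2 : tree_iso c1 c2 -> tree_iso c2 c1.
Proof.
case=> f [f_bij f_root f_adj].
have [g gK] : exists g, forall v, vert c2 v -> vert c1 (g v) /\ f (g v) = v.
  exists (fun v => if boolp.pselect (exists2 u, vert c1 u & f u = v) is left h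
                   then s2val (boolp.cid2 h) else [::]) => v vv.
  by case: boolp.pselect => [h|[]]; [case: (boolp.cid2 h) | apply: (iso_surj f_bij)].
have fK u : vert c1 u -> g (f u) = u.
  move=> vu; have [vg fg] := gK _ (iso_vert f_bij vu).
  exact: (iso_inj f_bij).
exists g; split.
- split.
  + by move=> v /gK[].
  + move=> v1 v2 /set_mem/gK[_ e1] /set_mem/gK[_ e2] e.
    by rewrite -e1 -e2 e.
  + by move=> u vu; exists (f u); [apply: (iso_vert f_bij) | apply: fK].
- by rewrite -{1}f_root fK.
- move=> v1 v2 /gK[vg1 e1] /gK[vg2 e2].
  by rewrite f_adj // e1 e2.
Qed.

Lemma tree_iso_trans c1 c2 c3 : tree_iso c1 c2 -> tree_iso c2 c3 -> tree_iso c1 c3.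
Proof.
case=> f [f_bij f_root f_adj] [h [h_bij h_root h_adj]].
exists (h \o f); split.
- split.
  + by move=> u /(iso_vert f_bij)/(iso_vert h_bij).
  + move=> u v /set_mem vu /set_mem vv /= e.
    by apply: (iso_inj f_bij) => //; apply: (iso_inj h_bij) => //; apply: (iso_vert f_bij).
  + move=> w /(iso_surj h_bij)[v /(iso_surj f_bij)[u vu <-] <-].
    by exists u.
- by rewrite /= f_root h_root.
- by move=> u v vu vv /=; rewrite f_adj // h_adj //; apply: (iso_vert f_bij).
Qed.

(* The isomorphism permutes the children of the root, whose subtrees are
   isomorphic by [iso_subtree]. *)
Lemma ball_card_iso c1 c2 n : tree_iso c1 c2 -> ball_card c1 n = ball_card c2 n.
Proof.
elim: n c1 c2 => [|n IH] c1 c2 [f [f_bij f_root f_adj]] //.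
rewrite !ball_cardS; congr _.+1.
pose sg i := head 0%N (f [:: i]).
have fi i : (i < c1 [::])%N -> f [:: i] = [:: sg i] /\ (sg i < c2 [::])%N.
  move=> ic; have vi : vert c1 [:: i] by rewrite /= ic.
  have := iso_size f_bij f_root f_adj vi; have := iso_vert f_bij vi.
  by rewrite /sg; case: (f [:: i]) => [|j [|]] //= /andP[jc _] _.
transitivity (\sum_(i <- iota 0 (c1 [::])) ball_card (fun u => c2 (sg i :: u)) n).
  rewrite big_seq_cond [RHS]big_seq_cond; apply: eq_bigr => i /andP[].
  rewrite mem_iota add0n => /andP[_ ic] _; apply: IH.
  have vi : vert c1 [:: i] by rewrite /= ic.
  by have := iso_subtree f_bij f_root f_adj vi; rewrite (fi i ic).1.
rewrite -(big_map sg xpredT (fun j => ball_card (fun u => c2 (j :: u)) n)).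
apply: perm_big; apply: uniq_perm; rewrite ?iota_uniq //.
  rewrite map_inj_in_uniq ?iota_uniq // => i i'.
  rewrite !mem_iota !add0n => /andP[_ h] /andP[_ h'] e.
  have [e1 _] := fi _ h; have [e2 _] := fi _ h'.
  suff [] : [:: i] = [:: i'] by [].
  by apply: (iso_inj f_bij); rewrite /= ?h ?h' // e1 e2 e.
move=> j; rewrite mem_iota add0n /=; apply/mapP/idP => [[i]|jc].
  by rewrite mem_iota add0n => /andP[_ /fi[_ h]] ->.
have vj : vert c2 [:: j] by rewrite /= jc.
have [u vu fu] := iso_surj f_bij vj.
have su := iso_size f_bij f_root f_adj vu; rewrite fu in su.
case: u su vu fu => [|i [|]] //= _ /andP[ic _] fu.
by exists i; rewrite ?mem_iota ?ic // /sg fu.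
Qed.

Lemma leq_wexp2r m n e : (m <= n)%N -> (m ^ e <= n ^ e)%N.
Proof. by move=> mn; elim: e => [|e IH]; rewrite ?expn0 // !expnS leq_mul. Qed.

Lemma leq_expSD y d k : ((y + d) ^ k.+1 <= y ^ k.+1 + k.+1 * d * (y + d) ^ k)%N.
Proof.
elim: k => [|k IH]; first by rewrite !expn1 expn0; lia.
have yk : (y ^ k.+1 <= (y + d) ^ k.+1)%N by apply: leq_wexp2r; lia.
rewrite [(y + d) ^ k.+2]expnS [y ^ k.+2]expnS.
apply: (@leq_trans ((y + d) * (y ^ k.+1 + k.+1 * d * (y + d) ^ k))).
  by rewrite leq_mul2l IH orbT.
move: yk; rewrite [(y + d) ^ k.+1]expnS.
set P := (y + d) ^ k; set Q := y ^ k.+1 => yk; nia.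
Qed.

Section PolynomialGrowth.
Implicit Types (g h : nat -> nat) (d e : nat).

(* Comparing with [(n + 1) ^ e] rather than [n ^ e] keeps the bounds
   meaningful at [n = 0]. *)
Definition growth_le g e := exists b, forall n, (g n <= b * n.+1 ^ e)%N.
Definition growth_ge g e := exists a, forall n, (n.+1 ^ e <= a * g n)%N.
Definition poly_growth g e := growth_le g e /\ growth_ge g e.

Lemma poly_growth_cst k : (0 < k)%N -> poly_growth (fun _ => k) 0.
Proof. by move=> k0; split; [exists k | exists 1] => n; rewrite expn0 ?muln1 ?mul1n. Qed.

Lemma poly_growthD g h d1 d2 : poly_growth g d1 -> poly_growth h d2 ->
  poly_growth (fun n => g n + h n)%N (maxn d1 d2).
Proof.
move=> [[b1 gb] [a1 ga]] [[b2 hb] [a2 ha]]; split.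
  exists (b1 + b2) => n; rewrite mulnDl leq_add //.
    by rewrite (leq_trans (gb n)) // leq_mul2l leq_pexp2l ?leq_maxl ?orbT.
  by rewrite (leq_trans (hb n)) // leq_mul2l leq_pexp2l ?leq_maxr ?orbT.
case: (leqP d2 d1) => _.
  by exists a1 => n; rewrite (leq_trans (ga n)) // leq_mul2l leq_addr orbT.
by exists a2 => n; rewrite (leq_trans (ha n)) // leq_mul2l leq_addl orbT.
Qed.

Lemma poly_growth_sum (I : eqType) (s : seq I) (F : I -> nat -> nat) :
  s != [::] -> (forall i, i \in s -> exists d, poly_growth (F i) d) ->
  exists d, poly_growth (fun n => \sum_(i <- s) F i n)%N d.
Proof.
elim: s => [|i s IH] // _ sF.
have [d Fi] := sF i (mem_head i s).
have sF' j : j \in s -> exists d, poly_growth (F j) d.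
  by move=> js; apply: sF; rewrite inE js orbT.
case: (eqVneq s [::]) => [->|s0].
  by exists d; under eq_fun do rewrite big_seq1.
have [d' Fs] := IH s0 sF'; exists (maxn d d').
by under eq_fun do rewrite big_cons; apply: poly_growthD.
Qed.

Lemma poly_growth_sumS (I : eqType) (s : seq I) (F : I -> nat -> nat) :
  (forall i, i \in s -> exists d, poly_growth (F i) d) ->
  exists d, poly_growth (fun n => (\sum_(i <- s) F i n).+1)%N d.
Proof.
case: (eqVneq s [::]) => [-> _|s0 /(poly_growth_sum s0)[d Fs]].
  by exists 0%N; under eq_fun do rewrite big_nil; apply: poly_growth_cst.
exists (maxn d 0); under eq_fun do rewrite -addn1.
exact: poly_growthD (poly_growth_cst _).
Qed.

Lemma poly_growth_shift g d k : poly_growth g d -> poly_growth (fun n => g (n + k)%N) d.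
Proof.
move=> [[b gb] [a ga]]; split.
  exists (b * k.+1 ^ d) => n; apply: (leq_trans (gb _)).
  by rewrite -mulnA leq_mul2l -expnMn leq_wexp2r ?orbT //; nia.
by exists a => n; rewrite (leq_trans _ (ga _)) // leq_wexp2r // ltnS leq_addr.
Qed.

Lemma poly_growth_succ g d : (0 < g 0)%N -> poly_growth (fun n => g n.+1) d ->
  poly_growth g d.
Proof.
move=> g0 [[b gb] [a ga]]; split.
  exists (b + g 0) => -[|n]; first by rewrite exp1n muln1 leq_addl.
  by rewrite (leq_trans (gb n)) // leq_mul ?leq_addr ?leq_wexp2r.
exists (2 ^ d * a).+1 => -[|n]; first by rewrite exp1n muln_gt0 g0.
apply: (@leq_trans (2 ^ d * n.+1 ^ d)); first by rewrite -expnMn leq_wexp2r //; lia.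
by rewrite mulSn (leq_trans _ (leq_addl _ _)) // -mulnA leq_mul2l ga orbT.
Qed.

Section Recurrence.
Variables (B S : nat -> nat) (p e : nat).
Hypothesis p_gt0 : (0 < p)%N.
Hypothesis B_rec : forall n, B (n + p) = (S n + B n)%N.
Hypothesis B_gt0 : forall n, (0 < B n)%N.

Lemma growth_le_rec : growth_le S e -> growth_le B e.+1.
Proof.
move=> [b Sb]; pose M := (\sum_(k < p) B k)%N.
exists (b + M); elim/ltn_ind => n IH; case: (ltnP n p) => [np|pn].
  apply: (@leq_trans (b + M)); last by rewrite leq_pmulr ?expn_gt0.
  by rewrite (leq_trans _ (leq_addl _ _)) // /M (bigD1 (Ordinal np)) //= leq_addr.
move: IH; have [m ->] : exists m, n = (m + p)%N by exists (n - p)%N; lia.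
move=> /(_ m ltac:(lia)) Bm.
have mp : (m.+1 ^ e + m.+1 ^ e.+1 <= (m + p).+1 ^ e.+1)%N.
  have : (m.+1 ^ e <= (m + p).+1 ^ e)%N by apply: leq_wexp2r; lia.
  rewrite !expnS; set P := m.+1 ^ e; set Q := (m + p).+1 ^ e; nia.
rewrite B_rec (leq_trans (leq_add (Sb m) Bm)) //.
apply: (@leq_trans ((b + M) * (m.+1 ^ e + m.+1 ^ e.+1))); last by rewrite leq_mul2l mp orbT.
by rewrite mulnDr leq_add // leq_mul2r leq_addr orbT.
Qed.

Lemma growth_ge_rec : growth_ge S e -> growth_ge B e.+1.
Proof.
move=> [a Sa]; pose A := (e.+1 * p * p.+1 ^ e * a + p ^ e.+1)%N.
exists A; elim/ltn_ind => n IH; case: (ltnP n p) => [np|pn].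
  apply: (@leq_trans (p ^ e.+1)); first exact: leq_wexp2r.
  by rewrite -[leqLHS]muln1 leq_mul ?leq_addl.
move: IH; have [m ->] : exists m, n = (m + p)%N by exists (n - p)%N; lia.
move=> /(_ m ltac:(lia)) Bm.
have pm : ((m + p).+1 ^ e <= p.+1 ^ e * m.+1 ^ e)%N by rewrite -expnMn leq_wexp2r //; nia.
rewrite B_rec mulnDr -addSn; apply: (leq_trans (leq_expSD _ _ _)).
rewrite addnC leq_add // /A mulnDl -!mulnA (leq_trans _ (leq_addr _ _)) //.
by rewrite !leq_mul2l (leq_trans pm) ?orbT // leq_mul2l Sa orbT.
Qed.

Lemma poly_growth_rec : poly_growth S e -> poly_growth B e.+1.
Proof. by case=> /growth_le_rec ? /growth_ge_rec. Qed.

End Recurrence.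

End PolynomialGrowth.

Section SpineDecomposition.
Variable c : tree.
Implicit Types (x s w : seq nat).

Lemma ball_card_subtreeS_child x k n : (k < c x)%N ->
  ball_card (subtree c x) n.+1 = (ball_card (subtree c (rcons x k)) n +
    \sum_(j <- iota 0 (c x) | j != k) ball_card (subtree c (rcons x j)) n).+1.
Proof.
by move=> kc; rewrite ball_card_subtreeS (bigD1_seq k) ?mem_iota ?iota_uniq.
Qed.

Definition off_spine x s t :=
  [seq rcons (x ++ take t s) j | j <- iota 0 (c (x ++ take t s)) & j != nth 0%N s t].

Lemma ball_card_spine x s t n : vert c (x ++ s) -> (t <= size s)%N ->
  ball_card (subtree c x) (n + t) =
  (\sum_(0 <= t' < t)
     (\sum_(w <- off_spine x s t') ball_card (subtree c w) (n + (t - t'.+1))).+1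
   + ball_card (subtree c (x ++ take t s)) n)%N.
Proof.
move=> vxs; elim: t n => [|t IH] n ts.
  by rewrite big_geq // addn0 take0 cats0.
have spine : x ++ take t.+1 s = rcons (x ++ take t s) (nth 0%N s t).
  by rewrite (take_nth 0%N ts) rcons_cat.
have st : (nth 0%N s t < c (x ++ take t s))%N.
  have := vert_take (size x + t.+1) vxs.
  by rewrite take_cat ltnNge leq_addr /= addKn spine vert_rcons => /andP[].
rewrite -addSnnS IH 1?ltnW // (ball_card_subtreeS_child _ st) -spine.
rewrite big_nat_recr //= subnn addn0.
under eq_big_nat => t' /andP[_ t't] do rewrite addSnnS -subSn //.
rewrite {3}/off_spine big_map big_filter; lia.
Qed.

End SpineDecomposition.

Definition subtree_iso c x y := tree_iso (subtree c x) (subtree c y).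

Lemma poly_growth_children c x :
  (forall j, (j < c x)%N -> exists d, poly_growth (ball_card (subtree c (rcons x j))) d) ->
  exists d, poly_growth (ball_card (subtree c x)) d.
Proof.
move=> childP.
case: (@poly_growth_sumS _ (iota 0 (c x)) (fun j => ball_card (subtree c (rcons x j)))).
  by move=> j; rewrite mem_iota => /andP[_]; apply: childP.
move=> d hd; exists d; apply: poly_growth_succ (ball_card_gt0 _ _) _.
by under eq_fun do rewrite ball_card_subtreeS.
Qed.

Lemma poly_growth_spine c x s : vert c (x ++ s) -> s != [::] -> subtree_iso c (x ++ s) x ->
  (forall t j, (t < size s)%N -> (j < c (x ++ take t s))%N -> j != nth 0%N s t ->
     exists d, poly_growth (ball_card (subtree c (rcons (x ++ take t s) j))) d) ->
  exists d, poly_growth (ball_card (subtree c x)) d.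
Proof.
move=> vxs s0 iso offP.
pose S n := (\sum_(0 <= t < size s) (\sum_(w <- off_spine c x s t)
               ball_card (subtree c w) (n + (size s - t.+1))).+1)%N.
have rec n : ball_card (subtree c x) (n + size s) = (S n + ball_card (subtree c x) n)%N.
  by rewrite (ball_card_spine _ vxs) // take_size (ball_card_iso _ iso).
have [e Se] : exists e, poly_growth S e.
  apply: poly_growth_sum => [|t]; first by rewrite -size_eq0 size_iota subn0 size_eq0.
  rewrite mem_index_iota => /andP[_ ts]; apply: poly_growth_sumS => w.
  case/mapP=> j; rewrite mem_filter mem_iota => /andP[js /andP[_ jc]] ->.
  by have [d hd] := offP t j ts jc js; exists d; apply: poly_growth_shift.
by exists e.+1; apply: poly_growth_rec rec (ball_card_gt0 _) Se; rewrite lt0n size_eq0.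
Qed.

Lemma sub_count_lt (T : eqType) (a b : pred T) (s : seq T) y :
  subpred a b -> y \in s -> b y -> ~~ a y -> (count a s < count b s)%N.
Proof.
move=> ab; elim: s => //= z s IH; rewrite inE => /orP[/eqP <- | ys] yb na.
  by rewrite yb (negbTE na) add0n add1n ltnS sub_count.
have := IH ys yb na; have : (a z <= b z)%N by case/boolP: (a z) => // /ab ->.
lia.
Qed.

Definition incomparable (a b : seq nat) :=
  exists t, [/\ (t < size a)%N, (t < size b)%N & nth 0%N a t != nth 0%N b t].

Definition copy_pair c x z a b :=
  [/\ incomparable a b, vert c (z ++ a), vert c (z ++ b),
      subtree_iso c (z ++ a) x & subtree_iso c (z ++ b) x].

Definition self_branching c := exists x a b, copy_pair c x x a b.

Section PeriodicTree.
Variables (c : tree) (N : nat).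
Hypothesis c_per : periodic_N c N.

(* Number of isomorphism types of subtrees met below [x]: every type has a
   representative in the ball [B(N)], and we count those. *)
Definition types_below x :=
  count (fun y => `[< exists z, vert c (x ++ z) /\ subtree_iso c (x ++ z) y >])
        (Defs.ball c N).

Lemma types_below_lt x r : vert c x ->
  (forall z, vert c (x ++ r ++ z) -> ~ subtree_iso c (x ++ r ++ z) x) ->
  (types_below (x ++ r) < types_below x)%N.
Proof.
move=> vx nocopy; have [y [vy sy xy]] := c_per vx.
apply: (@sub_count_lt _ _ _ _ y).
- move=> w /asboolP[z [vz iz]]; apply/asboolP.
  by exists (r ++ z); rewrite catA.
- by rewrite mem_ball vy sy.
- by apply/asboolP; exists [::]; rewrite cats0.
apply/negP => /asboolP[z [vz iz]]; apply: (nocopy z); rewrite catA //.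
exact: tree_iso_trans iz (tree_iso_sym xy).
Qed.

(* Off-spine children see fewer types: a copy of [T^x] below one of them would
   make [T] self-branching. *)
Lemma poly_growth_subtree : ~ self_branching c -> forall x, vert c x ->
  exists d, poly_growth (ball_card (subtree c x)) d.
Proof.
move=> nsb x; have [k] := ubnP (types_below x); elim: k x => // k IH x tx vx.
have IHx r : vert c (x ++ r) ->
    (forall z, vert c (x ++ r ++ z) -> ~ subtree_iso c (x ++ r ++ z) x) ->
    exists d, poly_growth (ball_card (subtree c (x ++ r))) d.
  move=> vxr nocopy; apply: IH vxr.
  exact: leq_trans (types_below_lt vx nocopy) _.
case: (boolp.pselect (exists2 s, s != [::] & vert c (x ++ s) /\ subtree_iso c (x ++ s) x)).
  case=> s s0 [vxs iso]; apply: (poly_growth_spine vxs s0 iso) => t j ts jc js.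
  have vxt : vert c (x ++ take t s).
    by move: vxs; rewrite -{1}(cat_take_drop t s) catA => /vert_catl.
  rewrite -cats1 -catA; apply: IHx => [|z vz iz].
    by rewrite catA cats1 vert_rcons vxt.
  have st : size (take t s) = t by rewrite size_takel // ltnW.
  rewrite -catA /= in vz iz; apply: nsb; exists x, s, (take t s ++ j :: z).
  split=> //; exists t; rewrite size_cat nth_cat st ltnn subnn /=.
  by split=> //; [rewrite addnS ltnS leq_addr | rewrite eq_sym].
move=> nocopy; apply: poly_growth_children => j jc; rewrite -cats1; apply: IHx.
  by rewrite cats1 vert_rcons vx.
by move=> z vz iz; apply: nocopy; exists ([:: j] ++ z).
Qed.

End PeriodicTree.

Lemma incomparable_take a b k : (k <= size a)%N -> (k <= size b)%N ->
  take k a != take k b -> incomparable a b.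
Proof.
move=> ka kb /eqP tab; apply: boolp.contrapT => nab; apply: tab.
apply: (@eq_from_nth _ 0%N) => [|i]; first by rewrite !size_takel.
rewrite size_takel // => ik; rewrite !nth_take //.
apply: boolp.contrapT => ne; apply: nab; exists i.
by split; [apply: leq_trans ka | apply: leq_trans kb | apply/eqP].
Qed.

Lemma copy_pair_transport c x a b z : copy_pair c x x a b -> vert c z ->
  subtree_iso c z x ->
  exists a' b', [/\ copy_pair c x z a' b', size a' = size a & size b' = size b].
Proof.
case=> -[t [ta tb nab]] vxa vxb xa xb vz zx.
have [g [g_bij g_root g_adj]] := tree_iso_sym zx.
have vx := vert_catl vxa.
have va : vert (subtree c x) a by move: vxa; rewrite vert_cat vx.
have vb : vert (subtree c x) b by move: vxb; rewrite vert_cat vx.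
have copy u : vert (subtree c x) u -> subtree_iso c (x ++ u) x ->
    vert c (z ++ g u) /\ subtree_iso c (z ++ g u) x.
  move=> vu xu; split; first by rewrite vert_cat vz (iso_vert g_bij vu).
  have := iso_subtree g_bij g_root g_adj vu; rewrite !subtree_cat => h.
  exact: tree_iso_trans (tree_iso_sym h) xu.
have [vza za] := copy a va xa; have [vzb zb] := copy b vb xb.
have [ga gb] := (iso_size g_bij g_root g_adj va, iso_size g_bij g_root g_adj vb).
exists (g a), (g b); split=> //; split=> //.
apply: (@incomparable_take _ _ t.+1); rewrite ?ga ?gb //.
have tab : take t.+1 a != take t.+1 b.
  by apply: contra_neq nab => e; rewrite -(nth_take 0%N (ltnSn t) a) e nth_take.
rewrite !(iso_take g_bij g_root g_adj) //.
by apply: contra_neq tab; apply: (iso_inj g_bij); apply: vert_take.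
Qed.

Lemma nat_crossing (g : nat -> nat) m n : (g 0 < m)%N -> (m <= g n)%N ->
  exists k, [/\ (k < n)%N, (g k < m)%N & (m <= g k.+1)%N].
Proof.
move=> g0; elim: n => [|n IH] gn; first by lia.
case: (ltnP (g n) m) => gnm; first by exists n.
by have [k [kn gk gk1]] := IH gnm; exists k; split=> //; lia.
Qed.

Section IncreasingWords.
Variables (P : nat -> seq nat) (L : nat).
Hypothesis P_incr : forall k, exists r, P k.+1 = P k ++ r /\ (0 < size r <= L)%N.

Lemma increasing_prefix k m : (k <= m)%N -> exists r, P m = P k ++ r.
Proof.
move=> /subnKC <-; elim: (m - k)%N => [|j [r Pkj]]; first by exists [::]; rewrite addn0 cats0.
by rewrite addnS; have [r' [-> _]] := P_incr (k + j); exists (r ++ r'); rewrite Pkj catA.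
Qed.

Lemma increasing_size k : (size (P 0) + k <= size (P k))%N.
Proof.
elim: k => [|k IH]; first by rewrite addn0.
by have [r [-> /andP[r0 _]]] := P_incr k; rewrite size_cat addnS -addn1 leq_add.
Qed.

Lemma ray_take_increasing c : (forall k, vert c (P k)) -> ray c (fun n => take n (P n)).
Proof.
move=> vP; split=> [|n]; first by rewrite take0.
have Pn k : (k <= size (P k))%N by apply: leq_trans (increasing_size k); apply: leq_addl.
split; first exact: vert_take.
have [r [-> /andP[r0 _]]] := P_incr n; exists (nth 0%N (P n ++ r) n).
by rewrite (take_nth 0%N) ?takel_cat // size_cat -addn1 leq_add.
Qed.

Lemma take_increasing_below n : (size (P 0) <= n)%N ->
  exists k r, [/\ r != [::], (size r <= L)%N & take n.+1 (P n.+1) = P k ++ r].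
Proof.
move=> P0n; have Pn := increasing_size n.+1.
have [k [kn Pk Pk1]] :=
  @nat_crossing (fun k => size (P k)) n.+1 n.+1 P0n (leq_trans (leq_addl _ _) Pn).
have [r [Pkr /andP[r0 rL]]] := P_incr k; have [r' ->] := increasing_prefix kn.
exists k, (take (n.+1 - size (P k)) r); split.
- by rewrite -size_eq0 size_take_min -lt0n leq_min subn_gt0 Pk r0.
- by rewrite size_take_min geq_min rL orbT.
by rewrite takel_cat // Pkr take_cat ltnNge (ltnW Pk).
Qed.

End IncreasingWords.

Local Open Scope ring_scope.

Section EsumSubsets.
Variables (R : realType) (T : choiceType) (a : T -> \bar R).
Hypothesis a_ge0 : forall x, (0 <= a x)%E.

Lemma le_esum_subset (A B : set T) : A `<=` B ->
  (\esum_(i in A) a i <= \esum_(i in B) a i)%E.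
Proof.
move=> AB; rewrite esum_mkcond [X in (_ <= X)%E]esum_mkcond; apply: le_esum => i _.
by case: ifPn => [/set_mem/AB/mem_set -> //|_]; case: ifP.
Qed.

Lemma le_esum_mem (A : set T) x : A x -> (a x <= \esum_(i in A) a i)%E.
Proof. by move=> Ax; rewrite -esum_set1 //; apply: le_esum_subset => y ->. Qed.

Lemma le_esum_disjointD (A B C : set T) : A `&` B `<=` set0 -> A `<=` C -> B `<=` C ->
  (\esum_(i in A) a i + \esum_(i in B) a i <= \esum_(i in C) a i)%E.
Proof.
move=> AB AC BC; rewrite (esumID A C) //; apply: leeD; apply: le_esum_subset.
  by move=> x Ax; split=> //; apply: AC.
by move=> x Bx; split; [apply: BC | move=> Ax; apply: (AB x)].
Qed.

End EsumSubsets.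

Definition strict_desc (z : seq nat) : set (seq nat) :=
  [set e | exists2 r, r != [::] & e = z ++ r].

Section CutsetWeight.
Variables (R : realType) (c : tree) (x : seq nat) (L : nat).
Variable next : seq nat -> seq nat * seq nat.
Hypothesis x_vert : vert c x.
Hypothesis next_pair : forall z, vert c z -> subtree_iso c z x ->
  [/\ copy_pair c x z (next z).1 (next z).2,
      (size (next z).1 <= L)%N & (size (next z).2 <= L)%N].
Variable lam : R.
Hypothesis lam_ge1 : 1 <= lam.
Hypothesis lamL : lam ^+ L <= 2.
Variable pi : set (seq nat).
Hypothesis pi_cut : cutset c pi.

Let weight (e : seq nat) : \bar R := (lam ^- size e)%:E.

Let weight_ge0 e : (0 <= weight e)%E.
Proof. by rewrite lee_fin invr_ge0 exprn_ge0 // (le_trans ler01). Qed.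

Let lam_antimono m n : (m <= n)%N -> lam ^- n <= lam ^- m.
Proof.
have lam0 : 0 < lam by apply: lt_le_trans lam_ge1.
by move=> mn; rewrite lef_pV2 ?posrE ?exprn_gt0 // ler_weXn2l.
Qed.

Let lam_halve n k : (k <= L)%N -> lam ^- n / 2 <= lam ^- (n + k).
Proof.
have lam0 : 0 < lam by apply: lt_le_trans lam_ge1.
move=> kL; rewrite exprD invfM; apply: ler_wpM2l; first by rewrite invr_ge0 exprn_ge0 ?ltW.
by rewrite lef_pV2 ?posrE ?exprn_gt0 // (le_trans _ lamL) // ler_weXn2l.
Qed.

Let weight_below z := \esum_(e in pi `&` strict_desc z) weight e.

Let light z := (weight_below z < (lam ^- size z / 2)%:E)%E.

(* Since [lam ^+ L <= 2], the two copies below [z] would together get at least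
   the weight required of [z]. *)
Lemma light_next z : vert c z -> subtree_iso c z x -> light z ->
  light (z ++ (next z).1) \/ light (z ++ (next z).2).
Proof.
move=> vz zx; have [[[t [ta tb nab]] _ _ _ _] aL bL] := next_pair vz zx.
set a := (next z).1 in ta nab aL *; set b := (next z).2 in tb nab bL *.
have below_sub u : u != [::] -> pi `&` strict_desc (z ++ u) `<=` pi `&` strict_desc z.
  move=> u0 e [pie [r _ er]]; split=> //; exists (u ++ r); last by rewrite er catA.
  by case: u u0 er.
have below_split : (weight_below (z ++ a) + weight_below (z ++ b) <= weight_below z)%E.
  apply: le_esum_disjointD => //; last 2 first.
  - by apply: below_sub; rewrite -size_eq0 -lt0n (leq_ltn_trans _ ta).
  - by apply: below_sub; rewrite -size_eq0 -lt0n (leq_ltn_trans _ tb).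
  move=> e [[_ [r1 _ ->]] [_ [r2 _]]]; rewrite -!catA => /catsI/(congr1 (nth 0%N ^~ t)).
  by rewrite !nth_cat ta tb => /eqP; rewrite (negbTE nab).
apply: contraPP => /boolp.not_orP[/negP ha /negP hb]; apply/negP.
rewrite /light -!leNgt in ha hb *; apply: le_trans below_split.
apply: le_trans (leeD ha hb); rewrite -EFinD lee_fin !size_cat.
by have := lam_halve (size z) aL; have := lam_halve (size z) bL; lra.
Qed.

Let step z := if `[< light (z ++ (next z).1) >] then z ++ (next z).1 else z ++ (next z).2.

Lemma step_spec z : vert c z -> subtree_iso c z x -> light z ->
  exists2 r, step z = z ++ r &
    [/\ (0 < size r <= L)%N, vert c (step z), subtree_iso c (step z) x & light (step z)].
Proof.
move=> vz zx lz; have [[[t [ta tb _]] va vb xa xb] aL bL] := next_pair vz zx.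
rewrite /step; case: asboolP => [la|nla].
  by exists (next z).1; rewrite ?aL ?(leq_ltn_trans _ ta).
have [//|lb] := light_next vz zx lz.
by exists (next z).2; rewrite ?bL ?(leq_ltn_trans _ tb).
Qed.

Lemma cutset_weight_ge : ((lam ^- size x / 2)%:E <= \esum_(e in pi) weight e)%E.
Proof.
rewrite leNgt; apply/negP => small.
pose path k := iter k step x.
have inv k : [/\ vert c (path k), subtree_iso c (path k) x & light (path k)].
  elim: k => [|k [vk xk lk]].
    split=> //; first exact: tree_iso_refl.
    by apply: le_lt_trans small; apply: le_esum_subset => // e [].
  by have [r _ [_ ? ? ?]] := step_spec vk xk lk.
have incr k : exists r, path k.+1 = path k ++ r /\ (0 < size r <= L)%N.
  by have [vk xk lk] := inv k; have [r e [? _ _ _]] := step_spec vk xk lk; exists r.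
have [n pin] := pi_cut.2 _ (ray_take_increasing incr (fun k => let: And3 v _ _ := inv k in v)).
set e := take n.+1 (path n.+1) in pin.
have se : size e = n.+1.
  by rewrite size_takel // (leq_trans _ (increasing_size incr _)) // leq_addl.
case: (leqP (size x) n) => [xn|nx]; last first.
  move: small; apply/negP; rewrite -leNgt (le_trans _ (le_esum_mem weight_ge0 pin)) //.
  rewrite lee_fin se ler_pdivrMr // (le_trans (lam_antimono nx)) // ler_peMr ?ler1n //.
  by rewrite invr_ge0 exprn_ge0 // (le_trans ler01).
have [k [r [r0 rL ekr]]] := take_increasing_below incr xn.
have [_ _ lk] := inv k; move: lk; apply/negP; rewrite -leNgt.
apply: le_trans (le_esum_mem weight_ge0 (conj pin _)); last by exists r.
by rewrite lee_fin /e ekr size_cat lam_halve.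
Qed.

End CutsetWeight.

Lemma root_of_two_spec (R : realType) (L : nat) : (0 < L)%N ->
  1 < 2 `^ L%:R^-1 :> R /\ (2 `^ L%:R^-1) ^+ L = 2 :> R.
Proof.
move=> L0; set lam := 2 `^ L%:R^-1.
have lamL : lam ^+ L = 2.
  by rewrite -powR_mulrn ?powR_ge0 // -powRrM mulVf ?powRr1 // pnatr_eq0 -lt0n.
split=> //; have : 1 <= lam by rewrite -(powRr0 2) ler_powR ?ler1n // invr_ge0 ler0n.
rewrite le_eqVlt => /orP[/eqP lam1|//]; move: lamL; rewrite -lam1 expr1n; lra.
Qed.

Lemma self_branching_br (R : realType) c : self_branching c -> (1%:E < @br R c)%E.
Proof.
case=> x [a [b pair]].
have vx : vert c x by case: pair => _ /vert_catl.
pose L := maxn (size a) (size b).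
pose next_spec z (ab : seq nat * seq nat) := vert c z -> subtree_iso c z x ->
  [/\ copy_pair c x z ab.1 ab.2, (size ab.1 <= L)%N & (size ab.2 <= L)%N].
have [next nextP] : {next & forall z, next_spec z (next z)}.
  apply: boolp.choice => z.
  case: (boolp.pselect (vert c z /\ subtree_iso c z x)) => [[vz zx]|nz].
    have [a' [b' [zpair sa sb]]] := copy_pair_transport pair vz zx.
    by exists (a', b') => _ _; rewrite /= sa sb leq_maxl leq_maxr.
  by exists ([::], [::]) => vz zx; case: nz.
have L0 : (0 < L)%N.
  by case: pair => -[t [ta _ _]] _ _ _ _; rewrite leq_max (leq_ltn_trans _ ta).
have [lam1 lamL] := root_of_two_spec R L0; set lam := 2 `^ L%:R^-1 in lam1 lamL.
have cut_ge : ((lam ^- size x / 2)%:E <= cut_inf c lam)%E.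
  apply: le_ereal_inf_tmp => _ [pi pi_cut <-].
  by apply: (cutset_weight_ge vx nextP) => //; [apply: ltW | rewrite lamL].
apply: lt_le_trans (_ : lam%:E <= br c)%E; first by rewrite lte_fin.
apply: ereal_sup_ubound; exists lam => //; split; first by apply: lt_trans lam1.
apply: lt_le_trans cut_ge; rewrite lte_fin divr_gt0 // invr_gt0 exprn_gt0 //.
exact: lt_trans lam1.
Qed.

Lemma poly_growth_ratio (R : realFieldType) g d : poly_growth g d ->
  exists a b : R, [/\ 0 < a, 0 < b &
    forall n, (1 <= n)%N -> a <= (g n)%:R / (n%:R ^+ d) <= b].
Proof.
move=> [[B gB] [A gA]].
have A0 : (0 < A)%N by have := gA 0%N; rewrite exp1n muln_gt0 => /andP[].
exists A%:R^-1, (B.+1 * 2 ^ d)%:R.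
split=> [||n n_gt0]; rewrite ?invr_gt0 ?ltr0n ?muln_gt0 ?expn_gt0 //.
have nd : 0 < n%:R ^+ d :> R by rewrite exprn_gt0 // ltr0n.
rewrite ler_pdivlMr // mulrC ler_pdivrMr ?ltr0n // ler_pdivrMr // -!natrX -!natrM !ler_nat.
rewrite mulnC (leq_trans _ (gA n)) ?leq_wexp2r //= (leq_trans (gB n)) //.
by rewrite -mulnA leq_mul ?leqnSn // -expnMn leq_wexp2r //; lia.
Qed.

Lemma infinite_growth_gt0 c d : infinite_tree c -> growth_le (ball_card c) d -> (0 < d)%N.
Proof.
move=> c_inf [B cB]; rewrite lt0n; apply/negP => /eqP d0; apply: c_inf.
apply: (sub_finite_set _ (finite_seq (Defs.ball c B))) => v /= vv.
rewrite mem_ball vv /=; have := ball_card_size vv; have := cB (size v).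
by rewrite d0 expn0 muln1 => h1 h2; apply: ltnW (leq_trans h2 h1).
Qed.

Theorem proposition3p1 (R : realType) (c : tree) :
  infinite_tree c -> periodic_tree c ->
  (1%:E < @br R c)%E \/
  exists d : nat, (1 <= d)%N /\
    exists a b : R, [/\ 0 < a, 0 < b &
      forall n : nat, (1 <= n)%N ->
        a <= (ball_card c n)%:R / (n%:R ^+ d) <= b].
Proof.
move=> c_inf [N c_per].
have [sb|nsb] := boolp.pselect (self_branching c); first by left; apply: self_branching_br.
right; have [d cd] : exists d, poly_growth (ball_card c) d :=
  poly_growth_subtree c_per nsb (isT : vert c [::]).
exists d; split; first exact: infinite_growth_gt0 c_inf cd.1.
exact: poly_growth_ratio cd.
Qed.
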